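(* Let $G=(\Gamma,s)$ be a connected rooted graph. The map $c\mapsto \mathbf{deg}-c$ is a bijection from $\mathrm{SR}(G)$ to $\mathrm{PPF}(G)$; equivalently, for a configuration $c:\tilde V\to\mathbb{Z}$, we have $c\in\mathrm{SR}(G)$ if and only if $\mathbf{deg}-c\in\mathrm{PPF}(G)$, where $\mathbf{deg}:\tilde V\to\mathbb{N}$, $v\mapsto\deg(v)$.
   Context: $\mathbb{N}=\{1,2,\dots\}$. A rooted graph $G=(\Gamma,s)$ is a finite undirected multigraph without loops with a distinguished vertex $s$ (the sink), possibly disconnected for subgraphs below; $V$ is its vertex set, $\tilde V=V\setminus\{s\}$. $\mathrm{mult}(vw)$ is the number of edges between $v,w$; $\deg^A(v)=\sum_{w\in A}\mathrm{mult}(vw)$ for $A\subseteq V$, $\deg(v)=\deg^V(v)$. $\mathbf 1_w$ is the indicator function of $w$. Parking side: a $G$-parking function is $p:\tilde V\to\mathbb{N}$ such that for every nonempty $S\subseteq\tilde V$ there is $v\in S$ with $p(v)\le\deg^{V\setminus S}(v)$; $\mathrm{PF}(G)$ is their set. For $A\subseteq\tilde V$, $G^A$ is the induced subgraph on $A\cup\{s\}$ rooted at $s$. For an ordered pair $(A,B)$ of nonempty disjoint sets with $A\cup B=\tilde V$ and $p\in\mathrm{PF}(G)$, $p^A(v)=p(v)$ ($v\in A$) and $p^B(v)=p(v)-\deg^A(v)$ ($v\in B$); $p$ is decomposable w.r.t. $(A,B)$ if $p^A\in\mathrm{PF}(G^A)$ and $p^B\in\mathrm{PF}(G^B)$; $p$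 is prime if it is decomposable w.r.t. no such $(A,B)$; $\mathrm{PPF}(G)$ is the set of prime $G$-parking functions. Sandpile side: a configuration is $c:\tilde V\to\mathbb{Z}$; stable if $c(v)<\deg(v)$ for all $v$. A stable $c$ is recurrent if there is no nonempty $F\subseteq\tilde V$ with $c(v)<\deg^F(v)$ for all $v\in F$; $\mathrm{Rec}(G)$ is their set. $V_M(c)=\{v\in\tilde V: c(v)\ge\deg(v)-\mathrm{mult}(vs)\}$; $c^{v-}=c-\sum_{w\in\tilde V\setminus\{v\}}\mathrm{mult}(ws)\mathbf 1_w$. $c\in\mathrm{Rec}(G)$ is strongly recurrent if $c^{v-}\in\mathrm{Rec}(G)$ for all $v\in V_M(c)$; $\mathrm{SR}(G)$ is their set. *)

From mathcomp Require Import all_boot all_order all_algebra.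
Set Implicit Arguments. Unset Strict Implicit. Unset Printing Implicit Defensive.
Import Order.TTheory GRing.Theory Num.Theory.
Local Open Scope ring_scope.

(* A rooted multigraph: vertex type V (finite), multiplicity function
   mult : V -> V -> nat (symmetric, loopless), sink s.
   Configurations / parking functions are functions V -> int; only their
   values on the non-sink vertices are ever inspected. *)

Section Sandpile.
Variable V : finType.
Variable mult : V -> V -> nat.
Variable s : V.

Definition adj : rel V := fun x y => (0 < mult x y)%N.

Definition degA (A : {set V}) (v : V) : nat := (\sum_(w in A) mult v w)%N.
Definition deg (v : V) : nat := degA [set: V] v.

Definition nonsink : {set V} := [set v | v != s].

(* p is a parking function of the induced rooted subgraph G^W on W ∪ {s}
   (W ⊆ V \ {s}); p must take values in N = {1,2,...} on W. *)
Definition is_PF (W : {set V}) (p : V -> int) : Prop :=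
  (forall v, v \in W -> 1 <= p v) /\
  (forall S : {set V}, S \subset W -> S != set0 ->
     exists2 v, v \in S & p v <= (degA ((s |: W) :\: S) v)%:Z).

Definition PF (p : V -> int) : Prop := is_PF nonsink p.

Definition pA (p : V -> int) : V -> int := p.
Definition pB (A : {set V}) (p : V -> int) : V -> int :=
  fun v => p v - (degA A v)%:Z.
Definition decomposable (p : V -> int) (A B : {set V}) : Prop :=
  is_PF A (pA p) /\ is_PF B (pB A p).

Definition PPF (p : V -> int) : Prop :=
  PF p /\
  ~ (exists A B : {set V},
        [/\ A != set0, B != set0, [disjoint A & B], A :|: B = nonsink
          & decomposable p A B]).

Definition stable (c : V -> int) : Prop :=
  forall v, v \in nonsink -> c v < (deg v)%:Z.

Definition recurrent (c : V -> int) : Prop :=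
  stable c /\
  ~ (exists F : {set V},
        [/\ F \subset nonsink, F != set0 &
            forall v, v \in F -> c v < (degA F v)%:Z]).

Definition VM (c : V -> int) : {set V} :=
  [set v | (v \in nonsink) && ((deg v)%:Z - (mult v s)%:Z <= c v)].

Definition cminus (c : V -> int) (v : V) : V -> int :=
  fun u => c u - (if (u \in nonsink) && (u != v) then (mult u s)%:Z else 0).

Definition strongly_recurrent (c : V -> int) : Prop :=
  recurrent c /\ forall v, v \in VM c -> recurrent (cminus c v).

End Sandpile.

(* Put p := deg - c.  A forbidden set F of c is precisely a set on which the
   burning condition for p fails, since p v > deg^(~F) v iff c v < deg^F v; so
   c is recurrent iff p is a parking function, and v lies in V_M(c) iff
   p v <= mult(vs).  For v in V_M(c), a set B avoiding v is forbidden for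
   c^{v-} iff p^B is positive on B, where A := tilde V \ B; call such B an
   upper block.  If (A, B) decomposes p, burning A in G^A stops at some v with
   p v <= mult(vs), and B is an upper block for v.  Conversely, take an upper
   block B of maximal size: p^B inherits the burning condition on B from p,
   and if p^A failed the burning condition on some T within A, then v is not
   in T and B u T would be a larger upper block. *)

From mathcomp Require Import all_boot all_order all_algebra zify.
Set Implicit Arguments. Unset Strict Implicit. Unset Printing Implicit Defensive.
Import Order.TTheory GRing.Theory Num.Theory.
Local Open Scope ring_scope.

Section Sandpile.
Variables (V : finType) (mult : V -> V -> nat) (s : V).

Local Notation degA := (degA mult).
Local Notation deg := (deg mult).
Local Notation nonsink := (nonsink s).
Local Notation is_PF := (is_PF mult s).
Local Notation PF := (PF mult s).
Local Notation pB := (pB mult).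
Local Notation decomposable := (decomposable mult s).
Local Notation stable := (stable mult s).
Local Notation recurrent := (recurrent mult s).
Local Notation VM := (VM mult s).
Local Notation cminus := (cminus mult s).

Lemma degA_setID (A B : {set V}) v :
  degA A v = (degA (A :&: B) v + degA (A :\: B) v)%N.
Proof. exact: big_setID. Qed.

Lemma deg_setC (A : {set V}) v : deg v = (degA A v + degA (~: A) v)%N.
Proof. by rewrite /deg (degA_setID _ A) setTI setTD. Qed.

Lemma degA_subset (A B : {set V}) v : A \subset B -> (degA A v <= degA B v)%N.
Proof. by move=> AB; rewrite (degA_setID B A) (setIidPr AB) leq_addr. Qed.

Lemma degA_set1 v w : degA [set w] v = mult v w.
Proof. exact: big_set1. Qed.

Lemma mult_le_degA (A : {set V}) v w : w \in A -> (mult v w <= degA A v)%N.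
Proof. by move=> wA; rewrite -degA_set1 degA_subset ?sub1set. Qed.

Lemma sink_notin (A : {set V}) : A \subset nonsink -> s \notin A.
Proof. by move=> /subsetP AN; apply/negP => /AN; rewrite inE eqxx. Qed.

Lemma setU_sink_nonsink : s |: nonsink = setT.
Proof. by apply/setP => x; rewrite !inE orbN. Qed.

Lemma deg_nonsinkD (B : {set V}) u : B \subset nonsink ->
  deg u = (degA (nonsink :\: B) u + degA B u + mult u s)%N.
Proof.
move=> BN; rewrite (deg_setC B) (degA_setID (~: B) nonsink) -degA_set1.
have -> : ~: B :&: nonsink = nonsink :\: B by rewrite setIC setDE.
have -> : ~: B :\: nonsink = [set s].
  by apply/setP => x; rewrite !inE negbK; case: eqP => [->|] //=; apply: sink_notin.
by rewrite addnA (addnC (degA B u)).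
Qed.

(* B is the upper part of the partition (nonsink :\: B, B), with p^B positive. *)
Definition upper_block (p : V -> int) (v : V) (B : {set V}) : bool :=
  [&& B \subset nonsink, v \notin B &
      [forall u in B, (degA (nonsink :\: B) u)%:Z < p u]].

Definition composite (p : V -> int) : Prop :=
  exists A B : {set V},
    [/\ A != set0, B != set0, [disjoint A & B], A :|: B = nonsink
      & decomposable p A B].

Lemma PF_burning_upper (p : V -> int) (B S : {set V}) :
  PF p -> B \subset nonsink -> S \subset B -> S != set0 ->
  exists2 u, u \in S & pB (nonsink :\: B) p u <= (degA ((s |: B) :\: S) u)%:Z.
Proof.
move=> [_ burn] BN SB S0.
have [u uS hu] := burn S (subset_trans SB BN) S0.
have E1 : ~: S :&: (nonsink :\: B) = nonsink :\: B.
  apply/setIidPr; rewrite subsetC; apply/subsetP => x /(subsetP SB) xB.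
  by rewrite !inE xB.
have E2 : ~: S :\: (nonsink :\: B) = (s |: B) :\: S.
  apply/setP => x; rewrite !inE.
  have := subsetP SB x; have := subsetP BN x; rewrite !inE.
  by case: (x \in S); case: (x \in B); case: (x == s) => //= [] /(_ isT).
rewrite setU_sink_nonsink setTD (degA_setID _ (nonsink :\: B)) E1 E2 in hu.
by exists u => //; rewrite /pB lerBlDl -PoszD.
Qed.

Lemma decomposable_of_is_PF_lower (p : V -> int) (B : {set V}) :
  PF p -> B \subset nonsink -> is_PF (nonsink :\: B) p ->
  (forall u, u \in B -> (degA (nonsink :\: B) u)%:Z < p u) ->
  decomposable p (nonsink :\: B) B.
Proof.
move=> pf BN pfA upB; split=> //; split=> [u uB|S SB S0].
  by rewrite /pB; have := upB u uB; lia.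
exact: PF_burning_upper.
Qed.

Definition has_upper_block (p : V -> int) (v : V) : bool :=
  [exists B, upper_block p v B && (B != set0)].

Lemma composite_has_upper_block (p : V -> int) : composite p ->
  exists2 v, (v \in nonsink) && (p v <= (mult v s)%:Z) & has_upper_block p v.
Proof.
move=> [A [B [A0 B0 dAB UAB [[_ burnA] [posB _]]]]].
have AN : A \subset nonsink by rewrite -UAB subsetUl.
have BN : B \subset nonsink by rewrite -UAB subsetUr.
have defA : A = nonsink :\: B.
  by rewrite -UAB setDUl setDv setU0; apply/esym/setDidPl.
have [v vA] := burnA A (subxx A) A0.
have -> : (s |: A) :\: A = [set s].
  by rewrite setDUl setDv setU0; apply/setDidPl; rewrite disjoints1 sink_notin.
rewrite degA_set1 => hv.
exists v; first by rewrite (subsetP AN v vA) hv.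
apply/existsP; exists B; rewrite B0 andbT /upper_block BN.
rewrite (disjointFr dAB vA) /=; apply/forall_inP => u uB.
by have := posB u uB; rewrite /pB /pA -defA; lia.
Qed.

Lemma upper_blockU (p : V -> int) v (B T : {set V}) :
  upper_block p v B -> T \subset nonsink :\: B -> v \notin T ->
  (forall u, u \in T -> (degA ((s |: (nonsink :\: B)) :\: T) u)%:Z < p u) ->
  upper_block p v (B :|: T).
Proof.
move=> /and3P[BN vB /forall_inP upB] TA vT upT.
have TN : T \subset nonsink := subset_trans TA (subsetDl _ _).
rewrite /upper_block subUset BN TN inE negb_or vB vT /=.
apply/forall_inP => u; rewrite inE => /orP[uB|uT].
  by apply: le_lt_trans (upB u uB); rewrite lez_nat degA_subset ?setDS ?subsetUl.
apply: le_lt_trans (upT u uT); rewrite lez_nat degA_subset //.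
by apply/subsetP => x; rewrite !inE negb_or => /andP[/andP[-> ->] ->]; rewrite orbT.
Qed.

Lemma is_PF_lower_of_maximal (p : V -> int) v (B : {set V}) :
  PF p -> p v <= (mult v s)%:Z -> upper_block p v B ->
  (forall B', upper_block p v B' -> #|B'| <= #|B|)%N ->
  is_PF (nonsink :\: B) p.
Proof.
move=> [pos _] hv upB maxB; split=> [u /setDP[uN _]|T TA T0]; first exact: pos.
have TN : T \subset nonsink := subset_trans TA (subsetDl _ _).
have [/existsP[u /andP[uT hu]] | ] :=
  boolP [exists u in T, p u <= (degA ((s |: (nonsink :\: B)) :\: T) u)%:Z].
  by exists u.
rewrite negb_exists_in => /forall_inP noT; exfalso.
have upT u : u \in T -> (degA ((s |: (nonsink :\: B)) :\: T) u)%:Z < p u.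
  by move=> uT; rewrite ltNge noT.
have vT : v \notin T.
  apply/negP => vT; have := upT v vT.
  have : (mult v s <= degA ((s |: (nonsink :\: B)) :\: T) v)%N.
    by rewrite mult_le_degA // !inE eqxx sink_notin.
  lia.
have := maxB _ (upper_blockU upB TA vT upT); rewrite cardsU.
have /disjoint_setI0 -> : [disjoint B & T].
  by rewrite disjoint_sym disjoints_subset (subset_trans TA) // setDE subsetIr.
by rewrite cards0 subn0 -{2}[#|B|]addn0 leq_add2l leqn0 cards_eq0 (negbTE T0).
Qed.

Lemma has_upper_block_composite (p : V -> int) v :
  PF p -> v \in nonsink -> p v <= (mult v s)%:Z -> has_upper_block p v ->
  composite p.
Proof.
move=> pf vN hv /existsP[F /andP[upF F0]].
have [M upM maxM] := arg_maxnP (fun B : {set V} => #|B|) upF.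
move: (upM) => /and3P[MN vM /forall_inP posM].
exists (nonsink :\: M), M; split.
- by apply/set0Pn; exists v; rewrite inE vM.
- by rewrite -card_gt0 (leq_trans _ (maxM F upF)) ?card_gt0.
- by rewrite disjoints_subset setDE subsetIr.
- by rewrite setDE setUIl [~: M :|: M]setUC setUCr setIT; apply/setUidPl.
- by apply: decomposable_of_is_PF_lower => //; apply: is_PF_lower_of_maximal hv upM maxM.
Qed.

Definition dual (c : V -> int) : V -> int := fun v => (deg v)%:Z - c v.

Lemma recurrent_PF (c : V -> int) : recurrent c <-> PF (dual c).
Proof.
rewrite /dual; split.
- move=> [stab noF]; split=> [v vN | S SN S0]; first by have := stab v vN; lia.
  have [/existsP[v /andP[vS hv]] |] :=
    boolP [exists v in S, (deg v)%:Z - c v <= (degA ((s |: nonsink) :\: S) v)%:Z].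
    by exists v.
  rewrite negb_exists_in => /forall_inP hS; case: noF; exists S; split=> // v vS.
  by have := hS v vS; rewrite setU_sink_nonsink setTD (deg_setC S v); lia.
- move=> [pos burn]; split=> [v vN | [F [FN F0 HF]]]; first by have := pos v vN; lia.
  have [v vF] := burn F FN F0; rewrite setU_sink_nonsink setTD (deg_setC F v).
  by have := HF v vF; lia.
Qed.

Lemma in_VM (c : V -> int) v :
  (v \in VM c) = (v \in nonsink) && (dual c v <= (mult v s)%:Z).
Proof. by rewrite inE /dual; case: (v \in nonsink) => //=; apply/idP/idP; lia. Qed.

Lemma cminus_at (c : V -> int) v : cminus c v v = c v.
Proof. by rewrite /cminus eqxx andbF subr0. Qed.

Lemma cminus_off (c : V -> int) v u :
  u \in nonsink -> u != v -> cminus c v u = c u - (mult u s)%:Z.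
Proof. by rewrite /cminus => -> ->. Qed.

Lemma stable_cminus (c : V -> int) v : stable c -> stable (cminus c v).
Proof. by move=> stab u uN; have := stab u uN; rewrite /cminus; case: ifP => _; lia. Qed.

Lemma recurrent_cminusE (c : V -> int) v : recurrent c -> v \in VM c ->
  recurrent (cminus c v) <-> ~~ has_upper_block (dual c) v.
Proof.
move=> [stab _]; rewrite in_VM => /andP[vN hv].
have forbiddenE (B : {set V}) u : B \subset nonsink -> v \notin B -> u \in B ->
    (cminus c v u < (degA B u)%:Z) = ((degA (nonsink :\: B) u)%:Z < dual c u).
  move=> BN vB uB; rewrite cminus_off ?(subsetP BN) //; last first.
    by apply: contraNneq vB => <-.
  by rewrite /dual (deg_nonsinkD u BN); apply/idP/idP; lia.
split.
- move=> [_ noF]; apply/existsP => -[B /andP[/and3P[BN vB /forall_inP upB] B0]].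
  by apply: noF; exists B; split=> // u uB; rewrite forbiddenE // upB.
- move=> noB; split; first exact: stable_cminus.
  move=> [F [FN F0 HF]].
  have vF : v \notin F.
    apply/negP => vF; have := HF v vF; rewrite cminus_at.
    have : (mult v s <= degA (~: F) v)%N by rewrite mult_le_degA // inE sink_notin.
    by have := deg_setC F v; rewrite /dual in hv; lia.
  move/negP: noB; apply; apply/existsP; exists F.
  rewrite F0 andbT /upper_block FN vF /=.
  by apply/forall_inP => u uF; rewrite -forbiddenE // HF.
Qed.

End Sandpile.

Theorem theorem2p11 (V : finType) (mult : V -> V -> nat) (s : V)
  (mult_sym : forall u v, mult u v = mult v u)
  (mult_loopless : forall v, mult v v = 0%N)
  (connected : forall u v, connect (adj mult) u v)
  (c : V -> int) :
  strongly_recurrent mult s c <->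
  PPF mult s (fun v => (deg mult v)%:Z - c v).
Proof.
split=> [[rc srec] | [pf nocomp]].
- have pf : PF mult s (dual mult c) by apply/recurrent_PF.
  split=> // /composite_has_upper_block[v /andP[vN hv] hB].
  have vVM : v \in VM mult s c by rewrite in_VM vN.
  by have /(recurrent_cminusE rc vVM)/negP := srec v vVM.
- have rc : recurrent mult s c by apply/recurrent_PF.
  split=> // v vVM; apply/(recurrent_cminusE rc vVM)/negP => hB.
  move: vVM; rewrite in_VM => /andP[vN hv].
  exact: nocomp (has_upper_block_composite pf vN hv hB).
Qed.
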